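(* Let $(\Omega,\Sigma,\mu;\phi)$ be a bimeasurable measure preserving dynamical system such that for every $A\in\Sigma$ the sequence $(\phi^n(A))_{n\in\mathbb{N}}$ converges in the measure algebra $\Sigma/\sim$. Then $\Sigma_\infty\subseteq\overline{\Sigma_{\mathrm{inv}}}$.
   Context: A measure preserving dynamical system $(\Omega,\Sigma,\mu;\phi)$ is a probability space with a measurable map $\phi\colon\Omega\to\Omega$ such that $\mu(\phi^{-1}(A))=\mu(A)$ for all $A\in\Sigma$; it is bimeasurable if $\phi^{-1}(A),\phi(A)\in\Sigma$ for all $A\in\Sigma$. $A\sim B$ iff $\mu(A\triangle B)=0$; $\Sigma/\sim$ is the set of equivalence classes with metric $d(A,B)=\mu(A\triangle B)$. $\Sigma_n=\{\phi^{-n}(A):A\in\Sigma\}$, $\Sigma_\infty=\bigcap_{n\in\mathbb{N}}\Sigma_n$, $\Sigma_{\mathrm{inv}}=\{A\in\Sigma:\phi^{-1}(A)=A\}$, and $\overline{\Sigma_{\mathrm{inv}}}=\{A\in\Sigma:\exists B\in\Sigma_{\mathrm{inv}},\ \mu(A\triangle B)=0\}$. *)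

From HB Require Import structures.
From mathcomp Require Import all_boot all_order all_algebra.
From mathcomp Require Import all_classical all_reals all_analysis.
Set Implicit Arguments. Unset Strict Implicit. Unset Printing Implicit Defensive.
Import Order.TTheory GRing.Theory Num.Theory.
Local Open Scope classical_set_scope.
Local Open Scope ring_scope.

Definition symdiff (T : Type) (A B : set T) : set T := (A `\` B) `|` (B `\` A).

Definition measure_preserving d (T : measurableType d) (R : realType)
  (mu : set T -> \bar R) (phi : T -> T) : Prop :=
  measurable_fun setT phi /\
  forall A, measurable A -> mu (phi @^-1` A) = mu A.

Definition bimeasurable d (T : measurableType d) (phi : T -> T) : Prop :=
  forall A : set T, measurable A ->
    measurable (phi @^-1` A) /\ measurable (phi @` A).

(* (phi^n(A))_n converges in the measure algebra Sigma/~ with metric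
   d(A,B) = mu(A \triangle B): some measurable B is the limit *)
Definition image_seq_converges d (T : measurableType d) (R : realType)
  (mu : set T -> \bar R) (phi : T -> T) (A : set T) : Prop :=
  exists B : set T, measurable B /\
    (fun n : nat => mu (symdiff (iter n phi @` A) B)) @ \oo --> 0%E.

Definition Sigma_n d (T : measurableType d) (phi : T -> T) (n : nat) : set (set T) :=
  [set E | exists A, measurable A /\ E = iter n phi @^-1` A].

Definition Sigma_infty d (T : measurableType d) (phi : T -> T) : set (set T) :=
  [set E | forall n : nat, Sigma_n phi n E].

Definition Sigma_inv d (T : measurableType d) (phi : T -> T) : set (set T) :=
  [set A | measurable A /\ phi @^-1` A = A].

(* closure of Sigma_inv: sets a.e.-equal to an invariant set *)
Definition Sigma_inv_bar d (T : measurableType d) (R : realType)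
  (mu : set T -> \bar R) (phi : T -> T) : set (set T) :=
  [set A | measurable A /\ exists B, Sigma_inv phi B /\ mu (symdiff A B) = 0%E].

(* Write E = phi^-n(A_n) for every n, so that phi^-n(phi^n E) = E, and let B be a limit
   of B_n = phi^n E.  Then phi^-1 B_(n+1) and B_n have the same phi^-n-preimage E, hence
   coincide a.e.; as phi^-1 is an isometry of the measure algebra,
   d(phi^-1 B, B) <= d(B, B_(n+1)) + d(B_n, B) -> 0.  So B is almost invariant, hence
   d(phi^-n B, B) = 0 for all n and
   d(E, B) <= d(phi^-n B_n, phi^-n B) + d(phi^-n B, B) = d(B_n, B) -> 0.
   Finally an almost invariant B is a.e. equal to the invariant set limsup_n phi^-n B. *)

From HB Require Import structures.
From mathcomp Require Import all_boot all_order all_algebra.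
From mathcomp Require Import all_classical all_reals all_analysis.
Set Implicit Arguments. Unset Strict Implicit. Unset Printing Implicit Defensive.
Import Order.TTheory.
Local Open Scope classical_set_scope.
Local Open Scope ring_scope.

Section symdiff_sets.
Context (T : Type).
Implicit Types A B C : set T.

Lemma symdiffC A B : symdiff A B = symdiff B A.
Proof. by rewrite /symdiff setUC. Qed.

Lemma symdiffxx A : symdiff A A = set0.
Proof. by apply/seteqP; split => x //= [[]|[]]. Qed.

Lemma symdiff_subU A B C : symdiff A C `<=` symdiff A B `|` symdiff B C.
Proof.
move=> x [[xA xC]|[xC xA]]; have [xB|xB] := pselect (B x).
- by right; left.
- by left; left.
- by left; right.
- by right; right.
Qed.

Lemma preimage_symdiff (f : T -> T) A B :
  f @^-1` symdiff A B = symdiff (f @^-1` A) (f @^-1` B).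
Proof. by apply/seteqP; split => x /=. Qed.

End symdiff_sets.

Lemma measurable_symdiff d (T : ringOfSetsType d) (A B : set T) :
  measurable A -> measurable B -> measurable (symdiff A B).
Proof. by move=> mA mB; apply: measurableU; apply: measurableD. Qed.

Lemma preimage_image_preimage (aT rT : Type) (f : aT -> rT) (A : set rT) :
  f @^-1` (f @` (f @^-1` A)) = f @^-1` A.
Proof.
apply/seteqP; split => [x [y Ay fyx]|]; last exact: preimage_image.
by rewrite /= -fyx.
Qed.

Section content_symdiff.
Local Open Scope ereal_scope.
Context d (T : ringOfSetsType d) (R : realFieldType).
Variable mu : {content set T -> \bar R}.

Lemma content_symdiff_le (A B C : set T) :
  measurable A -> measurable B -> measurable C ->
  mu (symdiff A C) <= mu (symdiff A B) + mu (symdiff B C).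
Proof.
move=> mA mB mC.
apply: le_trans (measureU2 mu (measurable_symdiff mA mB) (measurable_symdiff mB mC)).
apply: le_measure; rewrite ?inE; last exact: symdiff_subU.
- exact: measurable_symdiff.
- by apply: measurableU; exact: measurable_symdiff.
Qed.

Lemma null_symdiff_trans (A B C : set T) :
  measurable A -> measurable B -> measurable C ->
  mu (symdiff A B) = 0 -> mu (symdiff B C) = 0 -> mu (symdiff A C) = 0.
Proof.
move=> mA mB mC AB0 BC0; apply/eqP; rewrite -measure_le0.
by rewrite (le_trans (content_symdiff_le mA mB mC)) // AB0 BC0 adde0.
Qed.

Lemma measure_le_cvg0 (A : set T) (v : nat -> \bar R) :
  (forall n, mu A <= v n) -> v @ \oo --> 0 -> mu A = 0.
Proof.
move=> Av v0; apply/eqP; rewrite -measure_le0 -(cvg_lim _ v0) //.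
by apply: lime_ge; [apply/cvg_ex; exists 0 | exact: nearW].
Qed.

End content_symdiff.

Section lim_sup_set_sets.
Context (T : Type).

Lemma symdiff_lim_sup_set_sub (B : set T) (F : (set T)^nat) :
  symdiff B (lim_sup_set F) `<=` \bigcup_n symdiff (F n) B.
Proof.
move=> x [[Bx nsupFx]|[supFx nBx]].
  have [n nFx] : exists n, ~ (\bigcup_(j >= n) F j) x.
    by apply/existsNP => Fx; apply: nsupFx => n _; exact: Fx.
  by exists n => //; right; split => // Fnx; apply: nFx; exists n => /=.
by have [j _ Fjx] := supFx 0%N I; exists j => //; left.
Qed.

Lemma preimage_lim_sup_set_iter (f : T -> T) (B : set T) :
  f @^-1` lim_sup_set (fun n => iter n f @^-1` B) =
  lim_sup_set (fun n => iter n f @^-1` B).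
Proof.
apply/seteqP; split => x supx n _.
  have [j /= nj Bj] := supx n I.
  by exists j.+1; [exact: leqW | rewrite /preimage /= -iterS iterSr].
have [[|j] /= nj Bj] := supx n.+1 I; first by [].
by exists j => //; move: Bj; rewrite /preimage /= -iterS iterSr.
Qed.

End lim_sup_set_sets.

Section iterates.
Context d (T : measurableType d) (phi : T -> T).

Lemma measurable_iter_preimage n (X : set T) : measurable_fun setT phi ->
  measurable X -> measurable (iter n phi @^-1` X).
Proof.
move=> mphi; elim: n X => // n IH X mX; apply: (IH (phi @^-1` X)).
by rewrite -[_ @^-1` _]setTI; exact: mphi measurableT _ mX.
Qed.

Lemma measurable_iter_image n (X : set T) : bimeasurable phi ->
  measurable X -> measurable (iter n phi @` X).
Proof.
move=> bm mX; elim: n => [|n IH]; first by rewrite /= image_id.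
by rewrite /= -image_comp; exact: (bm _ IH).2.
Qed.

Lemma measurable_lim_sup_set_iter_preimage (B : set T) :
  measurable_fun setT phi -> measurable B ->
  measurable (lim_sup_set (fun n => iter n phi @^-1` B)).
Proof.
move=> mphi mB; apply: bigcapT_measurable => k.
by apply: bigcup_measurable => j _; exact: measurable_iter_preimage.
Qed.

End iterates.

Section measure_preserving.
Local Open Scope ereal_scope.
Context d (T : measurableType d) (R : realType).
Variables (mu : {measure set T -> \bar R}) (phi : T -> T).
Hypothesis mp : measure_preserving mu phi.

Let mpreimage_iter n (X : set T) :
  measurable X -> measurable (iter n phi @^-1` X).
Proof. exact: measurable_iter_preimage mp.1. Qed.

Let mpreimage (X : set T) : measurable X -> measurable (phi @^-1` X).
Proof. by move=> mX; rewrite -[_ @^-1` _]setTI; exact: mp.1. Qed.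

Lemma measure_iter_preimage n (X : set T) :
  measurable X -> mu (iter n phi @^-1` X) = mu X.
Proof.
elim: n X => // n IH X mX.
by rewrite (IH (phi @^-1` X)) ?mp.2 //; exact: mpreimage.
Qed.

Lemma measure_symdiff_preimage (X Y : set T) :
  measurable X -> measurable Y ->
  mu (symdiff (phi @^-1` X) (phi @^-1` Y)) = mu (symdiff X Y).
Proof.
by move=> mX mY; rewrite -preimage_symdiff mp.2 //; exact: measurable_symdiff.
Qed.

Lemma measure_symdiff_iter_preimage n (X Y : set T) :
  measurable X -> measurable Y ->
  mu (symdiff (iter n phi @^-1` X) (iter n phi @^-1` Y)) = mu (symdiff X Y).
Proof.
by move=> mX mY; rewrite -preimage_symdiff measure_iter_preimage //;
  exact: measurable_symdiff.
Qed.

Lemma null_symdiff_iter_preimage_eq n (X Y : set T) :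
  measurable X -> measurable Y -> iter n phi @^-1` X = iter n phi @^-1` Y ->
  mu (symdiff X Y) = 0.
Proof.
move=> mX mY XY.
by rewrite -(measure_symdiff_iter_preimage n mX mY) XY symdiffxx measure0.
Qed.

Lemma almost_invariant_iter (B : set T) : measurable B ->
  mu (symdiff (phi @^-1` B) B) = 0 ->
  forall n, mu (symdiff (iter n phi @^-1` B) B) = 0.
Proof.
move=> mB B0; elim=> [|n IH]; first by rewrite /= symdiffxx measure0.
have mB1 := mpreimage mB.
have step_null :
    mu (symdiff (iter n phi @^-1` (phi @^-1` B)) (iter n phi @^-1` B)) = 0.
  by rewrite measure_symdiff_iter_preimage.
exact: null_symdiff_trans (mpreimage_iter n mB1) (mpreimage_iter n mB) mB
  step_null IH.
Qed.

Lemma almost_invariant_ae_invariant (B : set T) : measurable B ->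
  mu (symdiff (phi @^-1` B) B) = 0 ->
  exists C, Sigma_inv phi C /\ mu (symdiff B C) = 0.
Proof.
move=> mB B0; pose C := lim_sup_set (fun n => iter n phi @^-1` B).
have mC : measurable C by exact: measurable_lim_sup_set_iter_preimage mp.1 mB.
exists C; split; first by split => //; exact: preimage_lim_sup_set_iter.
apply/eqP; rewrite -measure_le0.
have mF n : measurable (symdiff (iter n phi @^-1` B) B).
  by apply: measurable_symdiff => //; exact: mpreimage_iter.
apply: le_trans (measure_sigma_subadditive mu mF (measurable_symdiff mB mC)
  (@symdiff_lim_sup_set_sub _ _ _)) _.
by rewrite eseries0 // => n _ _; exact: almost_invariant_iter.
Qed.

Section iter_preimage_constant.
Variables (E B : set T) (Bs : (set T)^nat).
Hypotheses (mBs : forall n, measurable (Bs n)) (mB : measurable B).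
Hypothesis EBs : forall n, iter n phi @^-1` Bs n = E.
Hypothesis BsB : (fun n => mu (symdiff (Bs n) B)) @ \oo --> 0.

Lemma cvg_almost_invariant : mu (symdiff (phi @^-1` B) B) = 0.
Proof.
have shift_null n : mu (symdiff (phi @^-1` Bs n.+1) (Bs n)) = 0.
  by apply: (null_symdiff_iter_preimage_eq (n := n) (mpreimage (mBs n.+1)) (mBs n));
    rewrite EBs; exact: EBs n.+1.
apply: (measure_le_cvg0 (v := fun n => mu (symdiff (Bs n.+1) B) + mu (symdiff (Bs n) B))).
  move=> n; have mB1 := mpreimage mB; have mBs1 := mpreimage (mBs n.+1).
  apply: le_trans (content_symdiff_le mu mB1 mBs1 mB) _.
  (* [/=] turns [mu] seen as a content back into [mu] seen as a measure *)
  rewrite /= measure_symdiff_preimage // symdiffC; apply: leeD => //.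
  apply: le_trans (content_symdiff_le mu mBs1 (mBs n) mB) _.
  by rewrite /= shift_null add0e.
rewrite -[X in _ --> X]adde0; apply: cvgeD => //.
by rewrite (cvg_shiftS (fun n => mu (symdiff (Bs n) B))).
Qed.

Lemma null_symdiff_iter_preimage_limit : mu (symdiff E B) = 0.
Proof.
have mE : measurable E by rewrite -(EBs 0); exact: mBs.
apply: (measure_le_cvg0 (v := fun n => mu (symdiff (Bs n) B))) => // n.
apply: le_trans (content_symdiff_le mu mE (mpreimage_iter n mB) mB) _.
rewrite /= almost_invariant_iter // ?cvg_almost_invariant // adde0 -(EBs n).
by rewrite measure_symdiff_iter_preimage.
Qed.

End iter_preimage_constant.

End measure_preserving.

Theorem lemma3p4 (d : measure_display) (T : measurableType d) (R : realType)
  (mu : probability T R) (phi : T -> T) :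
  measure_preserving mu phi ->
  bimeasurable phi ->
  (forall A : set T, measurable A -> image_seq_converges mu phi A) ->
  Sigma_infty phi `<=` Sigma_inv_bar mu phi.
Proof.
move=> mp bm conv E SE.
have mE : measurable E by have [A [mA ->]] := SE 0%N.
pose Bs n := iter n phi @` E.
have mBs n : measurable (Bs n) by exact: measurable_iter_image.
have EBs n : iter n phi @^-1` Bs n = E.
  by rewrite /Bs; have [A [_ ->]] := SE n; exact: preimage_image_preimage.
have [B [mB BsB]] := conv E mE.
have [C [invC BC]] := almost_invariant_ae_invariant mp mB
  (cvg_almost_invariant mp mBs mB EBs BsB).
split => //; exists C; split => //.
exact: null_symdiff_trans mE mB invC.1
  (null_symdiff_iter_preimage_limit mp mBs mB EBs BsB) BC.
Qed.
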